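(* Let $D$ be a directed acyclic graph with exactly one source $\rho$, and let $e$ be the eccentricity of $\rho$. Then for every $i\in\{1,\ldots,e\}$ there is a node of $D$ with eccentricity $i$.
   Context: The eccentricity of a node $v$ of a digraph is the maximum, over all nodes $w$ reachable from $v$ by a directed path, of the directed distance from $v$ to $w$ (only reachable nodes are considered, so it is always finite). *)

(* A finite digraph is a finType T with edge relation e : rel T
   (e x y means there is an arc x -> y). *)
From mathcomp Require Import all_boot.
Set Implicit Arguments. Unset Strict Implicit. Unset Printing Implicit Defensive.

Definition walk_len (T : finType) (e : rel T) (v w : T) (n : nat) : Prop :=
  exists p : seq T, [/\ size p = n, path e v p & last v p = w].

Definition is_dist (T : finType) (e : rel T) (v w : T) (d : nat) : Prop :=
  walk_len e v w d /\ (forall d', walk_len e v w d' -> d <= d').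

Definition is_ecc (T : finType) (e : rel T) (v : T) (k : nat) : Prop :=
  (exists w, is_dist e v w k) /\ (forall w d, is_dist e v w d -> d <= k).

Definition acyclic (T : finType) (e : rel T) : Prop :=
  forall x y, e x y -> ~~ connect e y x.

Definition is_source (T : finType) (e : rel T) (x : T) : Prop :=
  forall y, ~~ e y x.

(** If [u] has eccentricity [m > 0], let [v] be the second node of a shortest
    walk from [u] to a farthest node: then [v] has eccentricity at least
    [m - 1], and by acyclicity [v] reaches strictly fewer nodes than [u].
    Starting from any node and stepping this way while the eccentricity
    exceeds [i], the eccentricity drops by at most one per step and the walk
    cannot go on forever, so it stops at a node of eccentricity exactly [i]. *)

From Stdlib Require Import Classical.
From mathcomp Require Import all_boot zify.

Set Implicit Arguments. Unset Strict Implicit. Unset Printing Implicit Defensive.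

Lemma classical_ex_minn (P : nat -> Prop) :
  (exists n, P n) -> exists2 m, P m & forall k, P k -> m <= k.
Proof.
move=> [n Pn]; apply: NNPP => no_min.
elim/ltn_ind: n Pn => n IH Pn; apply: no_min; exists n => // k Pk.
by rewrite leqNgt; apply/negP => lt_kn; apply: IH lt_kn Pk.
Qed.

Lemma classical_ex_maxn (P : nat -> Prop) b :
  (exists n, P n) -> (forall n, P n -> n <= b) ->
  exists2 m, P m & forall k, P k -> k <= m.
Proof.
move=> [n Pn] le_b.
have [|j Pj min_j] := @classical_ex_minn (fun j => P (b - j)).
  by exists (b - n); rewrite subKn ?le_b.
exists (b - j) => // k Pk.
have := min_j (b - k); rewrite subKn ?le_b // => /(_ Pk); have := le_b k Pk; lia.
Qed.

Section Eccentricity.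
Variables (T : finType) (e : rel T).

Lemma walk_len_connect v w n : walk_len e v w n -> connect e v w.
Proof. by case=> p [_ e_p last_p]; apply/connectP; exists p. Qed.

Lemma walk_len_cons u v w n : e u v -> walk_len e v w n -> walk_len e u w n.+1.
Proof. by move=> e_uv [p [<- e_p last_p]]; exists (v :: p); rewrite /= e_uv. Qed.

Lemma exists_dist v w : connect e v w -> exists d, is_dist e v w d.
Proof.
move=> /connectP [p e_p last_p].
have [|d walk_d min_d] := @classical_ex_minn (walk_len e v w).
  by exists (size p), p.
by exists d.
Qed.

Lemma dist_lt_card v w d : is_dist e v w d -> d < #|T|.
Proof.
case=> [[p [_ e_p last_p]] min_d].
case: (shortenP e_p) last_p => q e_q uniq_q _ last_q.
have le_dq : d <= size q by apply: min_d; exists q.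
rewrite (leq_ltn_trans le_dq) // -ltnS -[(size q).+1](card_uniqP uniq_q).
exact: max_card.
Qed.

Lemma exists_ecc v : exists k, is_ecc e v k.
Proof.
have [||k [w dist_k] max_k] := @classical_ex_maxn
  (fun d => exists w, is_dist e v w d) #|T|.
- by exists 0, v; split=> [|d _ //]; exists [::].
- by move=> d [w /dist_lt_card /ltnW].
by exists k; split; [exists w | move=> w' d dist_d; apply: max_k; exists w'].
Qed.

Lemma ecc_next_arc u m : is_ecc e u m.+1 ->
  exists2 v, e u v & forall m', is_ecc e v m' -> m <= m'.
Proof.
case=> [[w [[[|v p] [size_p e_p last_p]] min_dist]] _] //=.
move: e_p => /andP [e_uv e_p]; exists v => // m' [_ max_m'].
have walk_vw : walk_len e v w (size p) by exists p.
have [d dist_d] := exists_dist (walk_len_connect walk_vw).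
have le_md : m <= d by rewrite -ltnS; apply: min_dist; apply: walk_len_cons e_uv dist_d.1.
exact: leq_trans le_md (max_m' w d dist_d).
Qed.

Hypothesis acyclic_e : acyclic e.

Lemma card_reach_arc u v : e u v ->
  #|[set x | connect e v x]| < #|[set x | connect e u x]|.
Proof.
move=> e_uv; apply/proper_card/properP; split.
  by apply/subsetP => x; rewrite !inE; apply: connect_trans (connect1 e_uv).
by exists u; rewrite !inE ?connect0 ?acyclic_e.
Qed.

Lemma ecc_intermediate u m i : is_ecc e u m -> i <= m -> exists v, is_ecc e v i.
Proof.
have [n] := ubnP #|[set x | connect e u x]|.
elim: n u m => // n IH u m reach_u ecc_u le_im.
case: (eqVneq i m) => [-> | ne_im]; first by exists u.
case: m ecc_u le_im ne_im => [|m] ecc_u; first by rewrite leqn0 => /eqP ->.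
move=> le_im ne_im.
have [v e_uv ge_v] := ecc_next_arc ecc_u.
have [m' ecc_v] := exists_ecc v.
apply: (IH v m' _ ecc_v).
  exact: leq_trans (card_reach_arc e_uv) reach_u.
by apply: leq_trans (ge_v _ ecc_v); rewrite -ltnS ltn_neqAle ne_im.
Qed.

End Eccentricity.

Theorem mainTheorem4 (T : finType) (e : rel T) (rho : T) (k : nat) :
  acyclic e ->
  (forall x, is_source e x <-> x = rho) ->
  is_ecc e rho k ->
  forall i, 1 <= i <= k -> exists v : T, is_ecc e v i.
Proof.
move=> acyclic_e _ ecc_rho i /andP [_ le_ik].
exact: ecc_intermediate e acyclic_e rho k i ecc_rho le_ik.
Qed.
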